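(* Let $m\ge 11$ be odd and let $t_1\ge 2$ be an integer with $3t_1\le m-4$ and $m-3t_1$ even. Then $\rho(F_0(t_1,\tfrac{m-3t_1}{2},0))<\rho(F_0(1,\tfrac{m-3}{2},0))$, where $\rho(F_0(1,\frac{m-3}{2},0))$ is the largest root of $x^4-x^3+(1-m)x^2+(m-3)x+m-3=0$ and $\rho(F_0(t_1,\frac{m-3t_1}{2},0))$ is the largest root of $x^4-x^3+(t_1-m)x^2+(m-3t_1)x-3t_1^2+mt_1=0$.
   Context: $\rho(G)$ denotes the largest eigenvalue of the adjacency matrix of $G$. For integers $t_1\ge0$, $t_2\ge 1$, the graph $F_0(t_1,t_2,0)$ consists of a central vertex $u^*$, $t_1$ triangles $u^*a_ib_i$ ($i=1,\dots,t_1$) sharing only $u^*$, and further vertices $v,u_1,\dots,u_{t_2}$ with each $u_j$ adjacent to both $u^*$ and $v$; there are no other vertices or edges. It has $3t_1+2t_2$ edges. In particular $F_0(1,t_2,0)$ is $K_{2,t_2}$ with a triangle attached at a vertex of maximum degree. *)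

From HB Require Import structures.
From mathcomp Require Import all_boot all_order all_algebra.
Set Implicit Arguments. Unset Strict Implicit. Unset Printing Implicit Defensive.
Import Order.TTheory GRing.Theory Num.Theory.
Local Open Scope ring_scope.

(* Vertices of F_0(t1,t2,0) are 'I_(F0n t1 t2), labelled as:
   0 = u*, 1..t1 = a_i, t1+1..2t1 = b_i, 2t1+1 = v, 2t1+2..2t1+1+t2 = u_j. *)
Definition F0n (t1 t2 : nat) : nat := (2 * t1 + t2 + 2)%N.

Definition F0edge (t1 t2 i j : nat) : bool :=
  [|| (i == 0%N) && (1 <= j <= 2 * t1)%N,
      [&& (1 <= i <= t1)%N & j == (i + t1)%N],
      (i == 0%N) && (2 * t1 + 2 <= j < F0n t1 t2)%N
    | (i == 2 * t1 + 1)%N && (2 * t1 + 2 <= j < F0n t1 t2)%N ].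

Definition F0adj (R : nzRingType) (t1 t2 : nat) : 'M[R]_(F0n t1 t2) :=
  \matrix_(i, j) (F0edge t1 t2 i j || F0edge t1 t2 j i)%:R.

Definition is_spectral_radius (R : realFieldType) (n : nat) (A : 'M[R]_n) (r : R) : Prop :=
  eigenvalue A r /\ forall y, eigenvalue A y -> y <= r.

Definition is_largest_root (R : realFieldType) (p : {poly R}) (r : R) : Prop :=
  root p r /\ forall y, root p y -> y <= r.

From HB Require Import structures.
From mathcomp Require Import all_boot all_order all_algebra.
From mathcomp Require Import polyrcf.
From mathcomp Require Import zify ring lra.
Set Implicit Arguments.
Unset Strict Implicit.
Unset Printing Implicit Defensive.
Import Order.TTheory GRing.Theory Num.Theory.
Local Open Scope ring_scope.

(* Summing the eigenvector equations of F_0(t1,t2,0) over the triangle vertices and over the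
   u_j, and substituting into the equations at u* and at v, gives p(y) x_v = 0 for the quartic
   p(y) = y^4 - y^3 - 2 (t1 + t2) y^2 + 2 t2 y + 2 t1 t2. For y > 1, x_v = 0 would force the
   whole eigenvector to vanish, and conversely every root y > 1 of p carries an explicit
   eigenvector; as p is negative at sqrt t2 > 1 (at 3 when t1 = 1), the spectral radius is the
   largest root of p. For the same number m = 3 t1 + 2 t2 of edges, the quartic for t1 = 1 minus
   the one for t1 is -(t1 - 1) (y^2 - 3 y + 2 t2 - 3) < 0 beyond 3: were
   rho(F_0(t1, _, 0)) >= rho(F_0(1, _, 0)), the quartic for t1 = 1 would be negative at the
   former and so have a larger root. *)

Lemma big_nat_interval (V : nmodType) (P : nat -> bool) (g : nat -> V) a b c d :
  (a <= b <= c)%N -> (c <= d)%N -> (forall i, (a <= i < d)%N -> P i = (b <= i < c)%N) ->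
  \sum_(a <= i < d) (if P i then g i else 0) = \sum_(b <= i < c) g i.
Proof.
move=> /andP[ab bc] cd hP.
rewrite (@big_cat_nat _ _ _ b) ?(leq_trans bc cd) //= (@big_cat_nat _ _ _ c b d) //=.
rewrite big1_seq ?add0r; last by move=> i /andP[_]; rewrite mem_iota => hi; rewrite hP ?ifF //; lia.
rewrite [X in _ + X]big1_seq ?addr0; last first.
  by move=> i /andP[_]; rewrite mem_iota => hi; rewrite hP ?ifF //; lia.
by apply: eq_big_nat => i hi; rewrite hP ?ifT //; lia.
Qed.

Lemma big_nat_halves (V : nmodType) (t : nat) (f : nat -> V) :
  \sum_(1 <= i < (2 * t).+1) f i = \sum_(1 <= i < t.+1) (f i + f (i + t)%N).
Proof.
rewrite (@big_cat_nat _ _ _ t.+1) /=; try lia.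
rewrite big_split /=; congr (_ + _).
by rewrite -[t.+1]add1n big_addn; apply: congr_big_nat => //; lia.
Qed.

Section F0Neighbours.
Variables (R : nzRingType) (t1 t2 : nat).
Local Notation n := (F0n t1 t2).

Definition F0adjacent (i j : nat) : bool := F0edge t1 t2 i j || F0edge t1 t2 j i.

Definition nbr_sum (g : nat -> R) (j : nat) : R :=
  \sum_(0 <= i < n) (if F0adjacent i j then g i else 0).

Lemma mulmx_row_F0adj (g : nat -> R) (j : 'I_n) :
  ((\row_(i < n) g i) *m F0adj R t1 t2) 0 j = nbr_sum g j.
Proof.
rewrite mxE /nbr_sum big_mkord; apply: eq_bigr => i _.
by rewrite !mxE /F0adjacent; case: (_ || _); rewrite ?mulr1 ?mulr0.
Qed.

Lemma row_F0adj_eigenP (y : R) (g : nat -> R) :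
  (\row_(i < n) g i) *m F0adj R t1 t2 = y *: \row_(i < n) g i <->
  (forall k, (k < n)%N -> nbr_sum g k = y * g k).
Proof.
split=> [e k hk | e].
  by have := congr1 (fun w : 'rV_n => w 0 (Ordinal hk)) e; rewrite mulmx_row_F0adj !mxE.
by apply/rowP => j; rewrite mulmx_row_F0adj e // !mxE.
Qed.

Lemma F0adjacentC i j : F0adjacent i j = F0adjacent j i.
Proof. exact: orbC. Qed.

Lemma F0adjacent_center j : ((1 <= j <= 2 * t1) || (2 * t1 + 2 <= j < n))%N -> F0adjacent 0 j.
Proof. by rewrite /F0adjacent /F0edge /= => /orP[->|->]; rewrite ?orbT. Qed.

Lemma F0adjacent_triangle k : (1 <= k <= t1)%N -> F0adjacent k (k + t1).
Proof. by move=> hk; rewrite /F0adjacent /F0edge hk eqxx /= orbT. Qed.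

Lemma F0adjacent_fan j : (2 * t1 + 2 <= j < n)%N -> F0adjacent (2 * t1).+1 j.
Proof. by move=> hj; rewrite /F0adjacent /F0edge hj addn1 eqxx /= !orbT. Qed.

Lemma nbr_sum_pair (g : nat -> R) j c1 c2 : (c1 != c2)%N -> (c1 < n)%N -> (c2 < n)%N ->
  (forall i, F0adjacent i j -> (i == c1) || (i == c2)) -> F0adjacent c1 j -> F0adjacent c2 j ->
  nbr_sum g j = g c1 + g c2.
Proof.
move=> c12 c1n c2n only_c adj1 adj2.
rewrite /nbr_sum (eq_big_nat _ _ (F2 := fun i =>
  (if i == c1 then g c1 else 0) + (if i == c2 then g c2 else 0))); last first.
  move=> i _; case: (eqVneq i c1) => [->|ic1]; first by rewrite adj1 (negbTE c12) addr0.
  case: (eqVneq i c2) => [->|ic2]; first by rewrite adj2 add0r.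
  rewrite addr0; case: ifP => // adj.
  by move: (only_c i adj); rewrite (negbTE ic1) (negbTE ic2).
by rewrite big_split /= -!big_mkcond /= !big_nat1_eq /= c1n c2n.
Qed.

Lemma nbr_sum_center (g : nat -> R) :
  nbr_sum g 0 = \sum_(1 <= i < (2 * t1).+1) g i + \sum_((2 * t1).+2 <= i < n) g i.
Proof.
rewrite /nbr_sum (@big_cat_nat _ _ _ (2 * t1).+1) /=; try (rewrite /F0n; lia).
by congr (_ + _); apply: big_nat_interval => [||i]; rewrite /F0adjacent /F0edge /F0n; lia.
Qed.

Lemma nbr_sum_a (g : nat -> R) k : (1 <= k <= t1)%N -> nbr_sum g k = g 0%N + g (k + t1)%N.
Proof.
move=> hk; apply: nbr_sum_pair; rewrite /F0n; try lia.
- by move=> i; rewrite /F0adjacent /F0edge => /orP[] /or4P[] /andP[? ?]; lia.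
- by apply: F0adjacent_center; lia.
- by rewrite F0adjacentC F0adjacent_triangle.
Qed.

Lemma nbr_sum_b (g : nat -> R) k : (1 <= k <= t1)%N -> nbr_sum g (k + t1) = g 0%N + g k.
Proof.
move=> hk; apply: nbr_sum_pair; rewrite /F0n; try lia.
- by move=> i; rewrite /F0adjacent /F0edge => /orP[] /or4P[] /andP[? ?]; lia.
- by apply: F0adjacent_center; lia.
- exact: F0adjacent_triangle.
Qed.

Lemma nbr_sum_u (g : nat -> R) k : ((2 * t1).+2 <= k < n)%N ->
  nbr_sum g k = g 0%N + g (2 * t1).+1.
Proof.
move=> hk; apply: nbr_sum_pair; rewrite /F0n in hk *; try lia.
- by move=> i; rewrite /F0adjacent /F0edge => /orP[] /or4P[] /andP[? ?]; lia.
- by apply: F0adjacent_center; rewrite /F0n; lia.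
- by apply: F0adjacent_fan; rewrite /F0n; lia.
Qed.

Lemma nbr_sum_v (g : nat -> R) : nbr_sum g (2 * t1).+1 = \sum_((2 * t1).+2 <= i < n) g i.
Proof.
by apply: big_nat_interval => [||i]; rewrite /F0adjacent /F0edge /F0n; lia.
Qed.

End F0Neighbours.

(* The quartic of the statement, with m = 3 t1 + 2 t2 eliminated. *)
Definition F0poly (R : nzRingType) (t1 t2 : nat) : {poly R} :=
  'X^4 - 'X^3 - (2 * (t1%:R + t2%:R)) *: 'X^2 + (2 * t2%:R) *: 'X + (2 * t1%:R * t2%:R)%:P.

Lemma hornerF0poly (R : comNzRingType) (t1 t2 : nat) (y : R) :
  (F0poly R t1 t2).[y] = y ^+ 4 - y ^+ 3 - 2 * (t1%:R + t2%:R) * y ^+ 2 + 2 * t2%:R * y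
                         + 2 * t1%:R * t2%:R.
Proof. by rewrite !hornerE. Qed.

Lemma F0poly_coefE (R : nzRingType) (t1 t2 : nat) (a b c : R) :
  - (2 * (t1%:R + t2%:R)) = a -> 2 * t2%:R = b -> 2 * t1%:R * t2%:R = c ->
  F0poly R t1 t2 = 'X^4 - 'X^3 + a *: 'X^2 + b *: 'X + c%:P.
Proof. by move=> <- <- <-; rewrite scaleNr. Qed.

Section F0Eigenvalues.
Variables (R : realFieldType) (t1 t2 : nat).
Local Notation n := (F0n t1 t2).
Local Notation v := (2 * t1).+1.

Section EigenEquations.
Variables (y : R) (g : nat -> R).
Hypothesis eigen : forall k, (k < n)%N -> nbr_sum t1 t2 g k = y * g k.

Let eigen_a k : (1 <= k <= t1)%N -> y * g k = g 0%N + g (k + t1)%N.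
Proof. by move=> hk; rewrite -eigen ?nbr_sum_a //; rewrite /F0n; lia. Qed.

Let eigen_b k : (1 <= k <= t1)%N -> y * g (k + t1)%N = g 0%N + g k.
Proof. by move=> hk; rewrite -eigen ?nbr_sum_b //; rewrite /F0n; lia. Qed.

Let eigen_u k : (v.+1 <= k < n)%N -> y * g k = g 0%N + g v.
Proof. by move=> hk; rewrite -eigen ?nbr_sum_u //; lia. Qed.

Let eigen_v : y * g v = \sum_(v.+1 <= i < n) g i.
Proof. by rewrite -eigen ?nbr_sum_v //; rewrite /F0n; lia. Qed.

Let eigen_center : y * g 0%N = \sum_(1 <= i < v) g i + \sum_(v.+1 <= i < n) g i.
Proof. by rewrite -eigen ?nbr_sum_center //; rewrite /F0n; lia. Qed.

Let sum_ab : (y - 1) * \sum_(1 <= i < v) g i = 2 * t1%:R * g 0%N.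
Proof.
rewrite big_nat_halves mulr_sumr (eq_big_nat _ _ (F2 := fun=> 2 * g 0%N)).
  by rewrite sumr_const_nat subn1 -mulr_natl; ring.
by move=> i hi; rewrite mulrDr !mulrBl !mul1r eigen_a ?eigen_b //; ring.
Qed.

Let sum_u : y * \sum_(v.+1 <= i < n) g i = t2%:R * (g 0%N + g v).
Proof.
rewrite mulr_sumr (eq_big_nat _ _ (F2 := fun=> g 0%N + g v)) => [|i hi]; last exact: eigen_u.
by rewrite sumr_const_nat mulr_natl; congr (_ *+ _); rewrite /F0n; lia.
Qed.

Lemma F0_eigen_quartic : (F0poly R t1 t2).[y] * g v = 0.
Proof.
have sq_y : y * (y * g v) = t2%:R * (g 0%N + g v) by rewrite eigen_v sum_u.
have center : (y - 1) * (y * g 0%N) = 2 * t1%:R * g 0%N + (y - 1) * (y * g v).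
  by rewrite eigen_center mulrDr sum_ab eigen_v.
rewrite hornerF0poly.
transitivity (t2%:R * ((y - 1) * (y * g 0%N) - (2 * t1%:R * g 0%N + (y - 1) * (y * g v)))
  + (y ^+ 2 - y - 2 * t1%:R) * (y * (y * g v) - t2%:R * (g 0%N + g v))); first ring.
by rewrite sq_y center !subrr; ring.
Qed.

Lemma F0_eigen_vanish : (0 < t2)%N -> 1 < y -> g v = 0 -> forall k, (k < n)%N -> g k = 0.
Proof.
move=> t2_gt0 y_gt1 gv0.
have t2_neq0 : t2%:R != 0 :> R by rewrite pnatr_eq0 -lt0n.
have y_neq0 : y != 0 by rewrite gt_eqF // (lt_trans ltr01).
have y21_neq0 : y ^+ 2 - 1 != 0.
  by rewrite subr_eq0 gt_eqF // -[1](expr1n R 2) ltrXn2r // ler01.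
have g00 : g 0%N = 0.
  have : t2%:R * (g 0%N + g v) = 0 by rewrite -sum_u -eigen_v gv0 !mulr0.
  by rewrite gv0 addr0 => /eqP; rewrite mulf_eq0 (negbTE t2_neq0) => /eqP.
have gab k : (1 <= k <= t1)%N -> g k = 0 /\ g (k + t1)%N = 0.
  move=> hk; have ea := eigen_a hk; have eb := eigen_b hk; rewrite g00 add0r in ea; rewrite g00 in eb.
  have : (y ^+ 2 - 1) * g k = 0 by rewrite mulrBl mul1r expr2 -mulrA ea eb add0r subrr.
  move/eqP; rewrite mulf_eq0 (negbTE y21_neq0) => /eqP gk0.
  by rewrite -ea gk0 mulr0.
move=> k hk.
have [->//|k_pos] := posnP k.
have [ka|t1k] := leqP k t1; first by case: (gab k ltac:(lia)).
have [kb|vk] := leqP k (2 * t1).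
  by have [_] := gab (k - t1)%N ltac:(lia); rewrite subnK //; lia.
have [->//|kv] := eqVneq k v.
have := @eigen_u k ltac:(lia); rewrite g00 gv0 addr0 => /eqP.
by rewrite mulf_eq0 (negbTE y_neq0) => /eqP.
Qed.

End EigenEquations.

Hypothesis t2_gt0 : (0 < t2)%N.

Lemma F0_eigen_root (y : R) : 1 < y -> eigenvalue (F0adj R t1 t2) y -> root (F0poly R t1 t2) y.
Proof.
move=> y_gt1 /eigenvalueP[w hw w_neq0].
pose g k := oapp (w 0) 0 (insub k).
have wE : w = \row_(i < n) g i by apply/rowP => i; rewrite mxE /g valK.
rewrite wE in hw w_neq0; move/row_F0adj_eigenP: hw => eigen.
have /eqP := F0_eigen_quartic eigen; rewrite mulf_eq0 => /orP[//|/eqP gv0].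
case/negP: w_neq0; apply/eqP/rowP => i; rewrite !mxE.
exact: (F0_eigen_vanish eigen t2_gt0 y_gt1 gv0).
Qed.

Lemma F0_root_eigen (y : R) : 1 < y -> root (F0poly R t1 t2) y -> eigenvalue (F0adj R t1 t2) y.
Proof.
move=> y_gt1 /eqP P0.
have t2_neq0 : t2%:R != 0 :> R by rewrite pnatr_eq0 -lt0n.
have y1_neq0 : y - 1 != 0 by rewrite subr_eq0 gt_eqF.
(* Eigenvector normalised by x_v = 1, solved from the equations at the u_j, at v and at the a_i. *)
pose x0 := y ^+ 2 / t2%:R - 1; pose xa := x0 / (y - 1).
pose g k := if k == 0%N then x0 else if (k <= 2 * t1)%N then xa
            else if k == v then 1 else y / t2%:R.
have ga i : (1 <= i <= 2 * t1)%N -> g i = xa by move=> hi; rewrite /g ifF ?ifT //; lia.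
have gv : g v = 1 by rewrite /g eqxx !ifF //; lia.
have gu i : (v < i)%N -> g i = y / t2%:R by move=> hi; rewrite /g !ifF //; lia.
have sum_ab : \sum_(1 <= i < v) g i = xa *+ (2 * t1).
  by rewrite (eq_big_nat _ _ (F2 := fun=> xa)) ?sumr_const_nat ?subn1 // => i hi; apply: ga; lia.
have sum_u : \sum_(v.+1 <= i < n) g i = y.
  rewrite (eq_big_nat _ _ (F2 := fun=> y / t2%:R)) => [|i hi]; last by apply: gu; lia.
  rewrite sumr_const_nat (_ : n - v.+1 = t2)%N; last by rewrite /F0n; lia.
  by rewrite -(mulr_natr (y / t2%:R)) divfK.
apply/eigenvalueP; exists (\row_(i < n) g i); last first.
  have vn : (v < n)%N by rewrite /F0n; lia.
  by apply/negP => /eqP/rowP/(_ (Ordinal vn)); rewrite !mxE gv; apply/eqP; rewrite oner_eq0.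
apply/row_F0adj_eigenP => k hk.
have [->|k_pos] := posnP k.
  rewrite nbr_sum_center sum_ab sum_u -mulr_natl; apply/eqP; rewrite -subr_eq0.
  have -> : (2 * t1)%:R * xa + y - y * g 0%N = - (F0poly R t1 t2).[y] / (t2%:R * (y - 1)).
    by rewrite hornerF0poly /g /= /xa /x0 natrM; field; rewrite y1_neq0 t2_neq0.
  by rewrite P0 oppr0 mul0r.
have [ka|t1k] := leqP k t1.
  by rewrite nbr_sum_a ?(ga k) ?(ga (k + t1)%N) /g /= /xa; try lia; field.
have [kb|vk] := leqP k (2 * t1).
  by rewrite -(subnK (ltnW t1k)) nbr_sum_b ?(ga (k - t1)%N) ?(ga (k - t1 + t1)%N) /g /= /xa;
    try lia; field.
have [->|kv] := eqVneq k v; first by rewrite nbr_sum_v sum_u gv mulr1.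
by rewrite nbr_sum_u ?gv ?(gu k) /g /= /x0; try lia; field.
Qed.

Lemma eigenvalue_F0adj (y : R) : 1 < y -> eigenvalue (F0adj R t1 t2) y = root (F0poly R t1 t2) y.
Proof. by move=> y_gt1; apply/idP/idP; [apply: F0_eigen_root | apply: F0_root_eigen]. Qed.

Lemma F0_spectral_radius (r : R) :
  1 < r -> is_largest_root (F0poly R t1 t2) r -> is_spectral_radius (F0adj R t1 t2) r.
Proof.
move=> r_gt1 [root_r max_r]; split; first by rewrite eigenvalue_F0adj.
move=> y eig_y; have [y_le1|y_gt1] := leP y 1; first exact: le_trans y_le1 (ltW r_gt1).
by apply: max_r; rewrite -eigenvalue_F0adj.
Qed.

End F0Eigenvalues.

Lemma largest_root_exists (R : rcfType) (p : {poly R}) (x : R) :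
  p != 0 -> root p x -> exists r, is_largest_root p r.
Proof.
move=> p_neq0 root_x.
have rootsE y : root p y = (y \in rootsR p) by apply: (roots_onP (roots_on_rootsR p_neq0)).
exists (\big[Order.max/x]_(y <- rootsR p) y); split.
  rewrite big_seq; apply: (big_ind (root p)) => [//|a b ra rb|y]; last by rewrite rootsE.
  by case: leP.
by move=> y; rewrite rootsE => y_in; apply: le_bigmax_seq.
Qed.

Lemma poly_ivt_gt (R : rcfType) (p : {poly R}) (a b : R) :
  a <= b -> p.[a] < 0 -> 0 < p.[b] -> exists2 x, a < x & root p x.
Proof.
move=> ab pa pb.
have /(poly_ivtoo ab)[x x_ab root_x] : p.[a] * p.[b] < 0 by rewrite pmulr_llt0.
by exists x => //; move: x_ab; rewrite in_itv => /andP[].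
Qed.

Lemma F0poly_gt0 (R : realFieldType) (t1 t2 : nat) (y : R) :
  2 < y -> 2 * (t1%:R + t2%:R) <= y -> 0 < (F0poly R t1 t2).[y].
Proof.
move=> y_gt2 y_ge; have t1_ge0 : 0 <= t1%:R :> R by [].
have -> : (F0poly R t1 t2).[y] =
    y ^+ 2 * (y ^+ 2 - y - 2 * (t1%:R + t2%:R)) + 2 * t2%:R * (y + t1%:R).
  by rewrite hornerF0poly; ring.
have y_y2 : 0 < y * (y - 2) by apply: mulr_gt0; lra.
have lead : 0 < y ^+ 2 * (y ^+ 2 - y - 2 * (t1%:R + t2%:R)).
  by apply: mulr_gt0; rewrite ?exprn_gt0; lra.
have tail : 0 <= 2 * t2%:R * (y + t1%:R) by apply: mulr_ge0; [rewrite mulr_ge0 | lra].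
lra.
Qed.

Lemma F0poly_neq0 (R : realFieldType) (t1 t2 : nat) : F0poly R t1 t2 != 0.
Proof.
have t_ge0 : 0 <= t1%:R + t2%:R :> R by rewrite -natrD.
have := @F0poly_gt0 R t1 t2 (2 * (t1%:R + t2%:R) + 3) ltac:(lra) ltac:(lra).
by apply: contraTneq => ->; rewrite horner0 ltxx.
Qed.

Lemma F0poly_root_gt (R : rcfType) (t1 t2 : nat) (a : R) :
  (F0poly R t1 t2).[a] < 0 -> exists2 x, a < x & root (F0poly R t1 t2) x.
Proof.
have t_ge0 : 0 <= t1%:R + t2%:R :> R by rewrite -natrD.
have a_le := ler_norm a; have a_ge0 := normr_ge0 a.
move=> neg_a; apply: (poly_ivt_gt (b := `|a| + 2 * (t1%:R + t2%:R) + 3)) neg_a _; first lra.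
by apply: F0poly_gt0; lra.
Qed.

Lemma F0poly_sqrt_lt0 (R : rcfType) (t1 t2 : nat) :
  (1 < t2)%N -> (F0poly R t1 t2).[Num.sqrt t2%:R] < 0.
Proof.
move=> t2_gt1; set a := Num.sqrt _.
have a_sq : a ^+ 2 = t2%:R by rewrite sqr_sqrtr ?ler0n.
have a_ge0 : 0 <= a by rewrite sqrtr_ge0.
have a_gt1 : 1 < a.
  rewrite ltNge; apply/negP => /(exprn_ile1 2 a_ge0).
  by rewrite a_sq lern1 leqNgt t2_gt1.
have -> : (F0poly R t1 t2).[a] = t2%:R * (a - t2%:R) by rewrite hornerF0poly -a_sq; ring.
by rewrite pmulr_rlt0 ?ltr0n 1?ltnW // subr_lt0 -a_sq expr2 ltr_pMr ?(lt_trans ltr01).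
Qed.

Lemma F0poly_one_lt0 (R : realFieldType) (T : nat) : (3 < T)%N -> (F0poly R 1 T).[3] < 0.
Proof.
move=> T_gt3; have T_ge4 : 4 <= T%:R :> R by rewrite (ler_nat _ 4).
rewrite hornerF0poly; lra.
Qed.

Lemma F0poly_lt_fewer_triangles (R : realFieldType) (T t1 t2 : nat) (y : R) :
  (3 + 2 * T = 3 * t1 + 2 * t2)%N -> (1 < t1)%N -> (1 < t2)%N -> 3 <= y ->
  (F0poly R 1 T).[y] < (F0poly R t1 t2).[y].
Proof.
move=> edges t1_gt1 t2_gt1 y_ge3.
have eT : 2 * T%:R = 3 * t1%:R + 2 * t2%:R - 3 :> R.
  by have := congr1 (GRing.natmul (1 : R)) edges; rewrite !natrD; lra.
have -> : (F0poly R 1 T).[y] = (F0poly R t1 t2).[y] - (t1%:R - 1) * (y ^+ 2 - 3 * y + 2 * t2%:R - 3)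
    + (2 * T%:R - (3 * t1%:R + 2 * t2%:R - 3)) * (- y ^+ 2 + y + 1).
  by rewrite !hornerF0poly; ring.
have t1_ge2 : 2 <= t1%:R :> R by rewrite (ler_nat _ 2).
have t2_ge2 : 2 <= t2%:R :> R by rewrite (ler_nat _ 2).
have y_y3 : 0 <= y * (y - 3) by apply: mulr_ge0; lra.
have pos : 0 < (t1%:R - 1) * (y ^+ 2 - 3 * y + 2 * t2%:R - 3) by apply: mulr_gt0; lra.
by rewrite eT subrr mul0r addr0; lra.
Qed.

Lemma F0_spectral_radius_gt (R : rcfType) (t1 t2 : nat) (a : R) :
  (0 < t2)%N -> 1 <= a -> (F0poly R t1 t2).[a] < 0 ->
  exists r, [/\ is_spectral_radius (F0adj R t1 t2) r, is_largest_root (F0poly R t1 t2) r & a < r].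
Proof.
move=> t2_gt0 a_ge1 /F0poly_root_gt[x a_x root_x].
have [r [root_r max_r]] := largest_root_exists (F0poly_neq0 R t1 t2) root_x.
have a_r : a < r by apply: lt_le_trans a_x (max_r x root_x).
exists r; split => //; apply: F0_spectral_radius => //; exact: le_lt_trans a_ge1 a_r.
Qed.

Theorem mainTheorem11 (R : rcfType) (m t1 : nat)
  (hm : (11 <= m)%N) (hodd : odd m) (ht1 : (2 <= t1)%N)
  (h3 : (3 * t1 <= m - 4)%N) (hev : ~~ odd (m - 3 * t1)) :
  exists r1 r2 : R,
    [/\ is_spectral_radius (F0adj R t1 ((m - 3 * t1) %/ 2)) r1,
        is_spectral_radius (F0adj R 1 ((m - 3) %/ 2)) r2,
        is_largest_root ('X^4 - 'X^3 + (t1%:R - m%:R) *: 'X^2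
                          + (m%:R - 3 * t1%:R) *: 'X
                          + (- 3 * t1%:R ^+ 2 + m%:R * t1%:R)%:P) r1,
        is_largest_root ('X^4 - 'X^3 + (1 - m%:R) *: 'X^2
                          + (m%:R - 3) *: 'X + (m%:R - 3)%:P) r2
      & r1 < r2].
Proof.
set t2 := ((m - 3 * t1) %/ 2)%N; set T := ((m - 3) %/ 2)%N.
have m_t2 : (m = 3 * t1 + 2 * t2)%N by rewrite /t2 divn2 mul2n even_halfK //; lia.
have m_T : (m = 3 + 2 * T)%N.
  by rewrite /T divn2 mul2n even_halfK; [lia | rewrite oddB ?hodd //; lia].
clearbody t2 T.
have mR : m%:R = 3 * t1%:R + 2 * t2%:R :> R.
  by have := congr1 (GRing.natmul (1 : R)) m_t2; rewrite !natrD; lra.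
have mR' : m%:R = 3 + 2 * T%:R :> R.
  by have := congr1 (GRing.natmul (1 : R)) m_T; rewrite !natrD; lra.
rewrite -(@F0poly_coefE R t1 t2); try by rewrite mR; ring.
rewrite -(@F0poly_coefE R 1 T); try by rewrite mR'; ring.
have [r1 [rho1 root1 _]] := @F0_spectral_radius_gt R t1 t2 (Num.sqrt t2%:R) ltac:(lia)
  ltac:(by rewrite -{1}sqrtr1 ler_sqrt // ler1n; lia) (@F0poly_sqrt_lt0 R t1 t2 ltac:(lia)).
have [r2 [rho2 root2 r2_gt3]] := @F0_spectral_radius_gt R 1 T 3 ltac:(lia) ltac:(lra)
  (@F0poly_one_lt0 R T ltac:(lia)).
exists r1, r2; split => //; rewrite ltNge; apply/negP => r2_le_r1.
have := @F0poly_lt_fewer_triangles R T t1 t2 r1 ltac:(lia) ltac:(lia) ltac:(lia) ltac:(lra).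
rewrite (eqP root1.1) => /F0poly_root_gt[x r1_x /root2.2 x_le_r2].
by have := lt_le_trans r1_x (le_trans x_le_r2 r2_le_r1); rewrite ltxx.
Qed.
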